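(* Let $k$ be a positive integer and $L\in\mathcal L_k$. Place each vertex of $V$ at the corresponding point of $\mathbb Q\cup\{\infty\}\subset\mathbb R\cup\{\infty\}=\partial_\infty\mathbb H$ of the hyperbolic plane $\mathbb H$ (upper half-plane model), and draw each edge of $\mathcal F_k$ whose two endpoints both lie in $\phi_k^{-1}(L)$ as the hyperbolic geodesic joining its endpoints. Then any two distinct such geodesics are disjoint in $\mathbb H$; that is, this drawing is a planar embedding of the subgraph of $\mathcal F_k$ induced on $\phi_k^{-1}(L)$.
   Context: The vertex set $V$ consists of all reduced fractions $p/q$ with $p,q\in\mathbb Z$, $\gcd(p,q)=1$, together with $1/0$ (identified with $\infty$); here $p/q$ and $(-p)/(-q)$ denote the same vertex. For vertices define $d(p/q,a/b)=|pb-qa|$. The graph $\mathcal F_k$ has vertex set $V$, with an edge between $p/q$ and $a/b$ exactly when $d(p/q,a/b)=k$. An element $(a,b)\in(\mathbb Z/k\mathbb Z)^2$ is admissible if for $\lambda\in\mathbb Z/k\mathbb Z$, $(\lambda a,\lambda b)=0$ implies $\lambda=0$; $\mathcal L_k$ is the set of admissible elements modulo $v\sim\lambda v$ for units $\lambda\in(\mathbb Z/k\mathbb Z)^*$; $\phi_k:V\to\mathcal L_k$ sends $p/q$ to the class of $(p\bmod k,q\bmod k)$. *)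

From mathcomp Require Import all_boot all_order all_algebra all_reals.
Set Implicit Arguments. Unset Strict Implicit. Unset Printing Implicit Defensive.
Import Order.TTheory GRing.Theory Num.Theory.
Local Open Scope ring_scope.

(* A vertex p/q is represented by an integer pair (p, q) with gcd(p,q) = 1;
   (p,q) and (-p,-q) denote the same vertex; (1,0) ~ (-1,0) is infinity. *)
Definition vtx := (int * int)%type.
Definition is_vertex (v : vtx) : Prop := coprimez v.1 v.2.
Definition same_vertex (u v : vtx) : Prop := u = v \/ u = (- v.1, - v.2).

Definition dist (u v : vtx) : int := `|u.1 * v.2 - u.2 * v.1|.

Definition Fk_edge (k : int) (u v : vtx) : Prop := dist u v = k.

Definition admissible (k a b : int) : Prop :=
  forall lam : int, (k %| lam * a)%Z -> (k %| lam * b)%Z -> (k %| lam)%Z.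

(* phi_k(v) is the class of (a,b) in L_k, i.e. (p mod k, q mod k) = lam (a,b)
   for some unit lam of Z/kZ *)
Definition in_fiber (k a b : int) (v : vtx) : Prop :=
  exists lam : int, coprimez lam k /\
    (v.1 == lam * a %[mod k])%Z /\ (v.2 == lam * b %[mod k])%Z.

(* ideal boundary point of the upper half-plane: None = infinity *)
Definition bpt (R : realType) (v : vtx) : option R :=
  if v.2 == 0 then None else Some (v.1%:~R / v.2%:~R).

Definition geodesic (R : realType) (u v : vtx) (z : R * R) : Prop :=
  0 < z.2 /\
  match bpt R u, bpt R v with
  | Some s, Some t => (z.1 - (s + t) / 2) ^+ 2 + z.2 ^+ 2 = ((s - t) / 2) ^+ 2
  | None, Some t => z.1 = t
  | Some s, None => z.1 = s
  | None, None => False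
  end.

(* Write det u v = p q' - q p' for u = p/q and v = p'/q'.  Any two points of
   one fibre of phi_k have determinant divisible by k, and the two edges have
   |det u1 v1| = |det u2 v2| = k.  The Pluecker relation reads
     det u1 v1 * det u2 v2 = det u1 u2 * det v1 v2 - det u1 v2 * det v1 u2.
   If the geodesics [u1, v1] and [u2, v2] meet at a point z, the first product
   on the right has the sign of the left-hand side and the second the opposite
   sign, so k^2 = |det u1 u2 * det v1 v2| + |det u1 v2 * det v1 u2|.  Both
   summands are multiples of k^2, so one of them vanishes, and at a common
   point z this forces the two edges to have the same endpoints. *)
From mathcomp Require Import all_boot all_order all_algebra all_reals zify ring.
Set Implicit Arguments. Unset Strict Implicit. Unset Printing Implicit Defensive.
Import Order.TTheory GRing.Theory Num.Theory.
Local Open Scope ring_scope.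

Section PlaneVectors.
Variable R : realFieldType.
Implicit Types (a b c e : R * R) (s t : R).

Definition dot a b := a.1 * b.1 + a.2 * b.2.
Definition cross a b := a.1 * b.2 - a.2 * b.1.
Definition turn t a : R * R := (- (t * a.2), t * a.1).

Lemma dot_self_ge0 a : 0 <= dot a a.
Proof. by rewrite /dot -!expr2 addr_ge0 ?sqr_ge0. Qed.

Lemma cross_neq0_dot_self a b : cross a b != 0 -> dot a a != 0.
Proof.
case: a => a1 a2; apply: contraNneq.
rewrite /dot /cross /= -!expr2 => /eqP.
rewrite paddr_eq0 ?sqr_ge0 // !sqrf_eq0 => /andP [/eqP -> /eqP ->].
by rewrite !mul0r subrr.
Qed.

Lemma dot_eq0_turn a b : dot a a != 0 -> dot a b = 0 -> exists t, b = turn t a.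
Proof.
case: a b => [a1 a2] [b1 b2]; rewrite /dot /turn /= => aa0 ab0.
exists ((a1 * b2 - a2 * b1) / (a1 * a1 + a2 * a2)); congr pair.
- rewrite -[LHS]subr0 -(mulr0 (a1 / (a1 * a1 + a2 * a2))) -ab0; field.
  exact: aa0.
- rewrite -[LHS]subr0 -(mulr0 (a2 / (a1 * a1 + a2 * a2))) -ab0; field.
  exact: aa0.
Qed.

Lemma cross_turnr t a c : cross a (turn t c) = t * dot a c.
Proof. by rewrite /cross /dot /=; ring. Qed.

Lemma cross_turnl t a c : cross (turn t a) c = - (t * dot a c).
Proof. by rewrite /cross /dot /=; ring. Qed.

Lemma cross_turn t s a c : cross (turn t a) (turn s c) = t * s * cross a c.
Proof. by rewrite /cross /=; ring. Qed.

Lemma orthogonal_pairs_cross_signs a b c e :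
  dot a b = 0 -> dot c e = 0 -> cross a b != 0 -> cross c e != 0 ->
  [/\ 0 <= cross a b * cross c e * (cross a c * cross b e),
      cross a b * cross c e * (cross a e * cross b c) <= 0,
      cross a c * cross b e == 0 -> (cross a c == 0) && (cross b e == 0) &
      cross a e * cross b c == 0 -> (cross a e == 0) && (cross b c == 0)].
Proof.
move=> ab ce nab nce.
have [t bE] := dot_eq0_turn (cross_neq0_dot_self nab) ab.
have [s eE] := dot_eq0_turn (cross_neq0_dot_self nce) ce.
rewrite {}bE {}eE cross_turn !cross_turnr cross_turnl in nab nce *.
have /negbTE t0 : t != 0 by apply: contraNneq nab => ->; rewrite mul0r.
have /negbTE s0 : s != 0 by apply: contraNneq nce => ->; rewrite mul0r.
have aacc := mulr_ge0 (dot_self_ge0 a) (dot_self_ge0 c).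
split.
- have -> : t * dot a a * (s * dot c c) * (cross a c * (t * s * cross a c))
      = (t * s * cross a c) ^+ 2 * (dot a a * dot c c) by ring.
  by rewrite mulr_ge0 ?sqr_ge0.
- have -> : t * dot a a * (s * dot c c) * (s * dot a c * - (t * dot a c))
      = - ((t * s * dot a c) ^+ 2 * (dot a a * dot c c)) by ring.
  by rewrite oppr_le0 mulr_ge0 ?sqr_ge0.
- by rewrite !mulf_eq0 t0 s0 /=; case: eqP.
- by rewrite mulf_eq0 oppr_eq0 !mulf_eq0 t0 s0 /=; case: eqP.
Qed.

End PlaneVectors.

Definition det (u v : vtx) : int := u.1 * v.2 - u.2 * v.1.

Lemma det_plucker (u1 v1 u2 v2 : vtx) :
  det u1 v1 * det u2 v2 = det u1 u2 * det v1 v2 - det u1 v2 * det v1 u2.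
Proof. by rewrite /det; ring. Qed.

Lemma in_fiber_dvd_det (k a b : int) (u v : vtx) :
  in_fiber k a b u -> in_fiber k a b v -> (k %| det u v)%Z.
Proof.
move=> [l [_ [hu1 hu2]]] [m [_ [hv1 hv2]]].
move: hu1 hu2 hv1 hv2; rewrite !eqz_mod_dvd => hu1 hu2 hv1 hv2.
have -> : det u v = (u.1 - l * a) * v.2 + l * a * (v.2 - m * b)
                  - ((u.2 - l * b) * v.1 + l * b * (v.1 - m * a)).
  by rewrite /det; ring.
by apply: rpredB; apply: rpredD; first [exact: dvdz_mulr | exact: dvdz_mull].
Qed.

Lemma det_eq0_same_vertex (u v : vtx) :
  is_vertex u -> is_vertex v -> det u v = 0 -> same_vertex u v.
Proof.
case: u v => [p q] [p' q']; rewrite /is_vertex /det /same_vertex /= => cu cv D0.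
have [[x y] /= bezout] := coprimezP _ _ cu.
set l := x * p' + y * q'.
have p'E : p' = l * p.
  apply/eqP; rewrite -subr_eq0.
  have -> : p' - l * p = p' * (1 - (x * p + y * q)) - y * (p * q' - q * p').
    by rewrite /l; ring.
  by rewrite bezout D0 subrr !mulr0 subr0.
have q'E : q' = l * q.
  apply/eqP; rewrite -subr_eq0.
  have -> : q' - l * q = q' * (1 - (x * p + y * q)) + x * (p * q' - q * p').
    by rewrite /l; ring.
  by rewrite bezout D0 subrr !mulr0 addr0.
have /eqP l1 : `|l|%:Z == 1.
  by move: cv; rewrite p'E q'E /coprimez -mulz_gcdr (eqP cu) mulr1.
rewrite p'E q'E; have [->|->] : l = 1 \/ l = -1 by lia.
- by left; rewrite !mul1r.
- by right; rewrite !mulN1r !opprK.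
Qed.

Lemma normr_sub_opposite_signs (R : realDomainType) (P X Y : R) :
  P != 0 -> P = X - Y -> 0 <= P * X -> P * Y <= 0 -> `|P| = `|X| + `|Y|.
Proof.
move=> P0 PE; case: (ltgtP P 0) => [Pneg|Ppos|P00]; last by rewrite P00 eqxx in P0.
- rewrite nmulr_rge0 // nmulr_rle0 // => X0 Y0.
  by rewrite ltr0_norm // ler0_norm // ger0_norm // PE opprB addrC.
- rewrite pmulr_rge0 // pmulr_rle0 // => X0 Y0.
  by rewrite gtr0_norm // ger0_norm // ler0_norm // PE.
Qed.

Lemma dvdz_normD_eq0 (m X Y : int) :
  0 < m -> (m %| X)%Z -> (m %| Y)%Z -> `|X| + `|Y| = m -> X = 0 \/ Y = 0.
Proof.
move=> m0 /dvdzP [x ->] /dvdzP [y ->].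
rewrite !normrM (gtr0_norm m0) -mulrDl -[RHS]mul1r => /(mulIf (lt0r_neq0 m0)) xy.
have [->|->] : x = 0 \/ y = 0 by lia.
- by left; rewrite mul0r.
- by right; rewrite mul0r.
Qed.

Section Geodesics.
Variable R : realType.
Implicit Types (u v : vtx) (z : R * R).

(* By Thales, z lies
   on the geodesic with ideal endpoints u and v iff [ell u z] and [ell v z] are
   orthogonal (also when an endpoint is infinity), and
   cross (ell u z) (ell v z) = y * det u v. *)
Definition ell u z : R * R := (u.1%:~R - u.2%:~R * z.1, u.2%:~R * z.2).

Lemma cross_ell u v z : cross (ell u z) (ell v z) = z.2 * (det u v)%:~R.
Proof. by rewrite /cross /ell /det /= rmorphB /= !rmorphM /=; ring. Qed.

Lemma geodesic_dot_ell u v z : geodesic u v z -> dot (ell u z) (ell v z) = 0.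
Proof.
case: u v z => [p q] [p' q'] [x y]; rewrite /geodesic /bpt /dot /ell /=.
have intr_neq0 (n : int) : n <> 0 -> (n%:~R : R) != 0.
  by move=> /eqP; rewrite intr_eq0.
case: eqP => [-> | /intr_neq0 q0]; case: eqP => [-> | /intr_neq0 q'0] [_] //= h.
- by rewrite h; field.
- by rewrite h; field.
- move/eqP: h; rewrite -subr_eq0 => /eqP h.
  by rewrite -(mulr0 (q%:~R * q'%:~R)) -h; field; rewrite q0 q'0.
Qed.

Lemma geodesics_meet_det_signs u1 v1 u2 v2 z :
  geodesic u1 v1 z -> geodesic u2 v2 z -> det u1 v1 != 0 -> det u2 v2 != 0 ->
  [/\ 0 <= det u1 v1 * det u2 v2 * (det u1 u2 * det v1 v2),
      det u1 v1 * det u2 v2 * (det u1 v2 * det v1 u2) <= 0,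
      det u1 u2 * det v1 v2 == 0 -> (det u1 u2 == 0) && (det v1 v2 == 0) &
      det u1 v2 * det v1 u2 == 0 -> (det u1 v2 == 0) && (det v1 u2 == 0)].
Proof.
move=> g1 g2 n1 n2; have y0 : 0 < z.2 by case: g1.
have yD0 (n : int) : (z.2 * n%:~R == 0) = (n == 0).
  by rewrite mulf_eq0 gt_eqF // intr_eq0.
have y2D0 (n : int) : (z.2 ^+ 2 * n%:~R == 0) = (n == 0).
  by rewrite mulf_eq0 expf_eq0 gt_eqF // intr_eq0.
have y2 (m n : int) : z.2 * m%:~R * (z.2 * n%:~R) = z.2 ^+ 2 * (m * n)%:~R.
  by rewrite intrM; ring.
have y4 (m n : int) :
  z.2 ^+ 2 * m%:~R * (z.2 ^+ 2 * n%:~R) = z.2 ^+ 2 * z.2 ^+ 2 * (m * n)%:~R.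
  by rewrite intrM; ring.
have y4_gt0 : 0 < z.2 ^+ 2 * z.2 ^+ 2 by rewrite mulr_gt0 ?exprn_gt0.
have := orthogonal_pairs_cross_signs (geodesic_dot_ell g1) (geodesic_dot_ell g2).
rewrite !cross_ell !yD0 => /(_ n1 n2).
by rewrite !y2 !y2D0 !y4 pmulr_rge0 // pmulr_rle0 // ler0z lerz0.
Qed.

End Geodesics.

Theorem proposition4p11 (R : realType) (k : int) (hk : 0 < k)
  (a b : int) (hL : admissible k a b)
  (u1 v1 u2 v2 : vtx)
  (hu1 : is_vertex u1) (hv1 : is_vertex v1)
  (hu2 : is_vertex u2) (hv2 : is_vertex v2)
  (fu1 : in_fiber k a b u1) (fv1 : in_fiber k a b v1)
  (fu2 : in_fiber k a b u2) (fv2 : in_fiber k a b v2)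
  (e1 : Fk_edge k u1 v1) (e2 : Fk_edge k u2 v2)
  (hdist : ~ (same_vertex u1 u2 /\ same_vertex v1 v2) /\
           ~ (same_vertex u1 v2 /\ same_vertex v1 u2))
  (z : R * R) :
  ~ (geodesic u1 v1 z /\ geodesic u2 v2 z).
Proof.
move=> [g1 g2].
have D1 : `|det u1 v1| = k := e1.
have D2 : `|det u2 v2| = k := e2.
have nD1 : det u1 v1 != 0 by rewrite -normr_eq0 D1 gt_eqF.
have nD2 : det u2 v2 != 0 by rewrite -normr_eq0 D2 gt_eqF.
have [sX sY vanishX vanishY] := geodesics_meet_det_signs g1 g2 nD1 nD2.
have k2_dvd u v u' v' : in_fiber k a b u -> in_fiber k a b u' ->
    in_fiber k a b v -> in_fiber k a b v' -> (k * k %| det u u' * det v v')%Z.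
  move=> fu fu' fv fv'.
  exact: dvdz_mul (in_fiber_dvd_det fu fu') (in_fiber_dvd_det fv fv').
have := normr_sub_opposite_signs (mulf_neq0 nD1 nD2) (det_plucker _ _ _ _) sX sY.
rewrite normrM D1 D2 => /esym.
case/(dvdz_normD_eq0 (mulr_gt0 hk hk) (k2_dvd _ _ _ _ fu1 fu2 fv1 fv2)
                                      (k2_dvd _ _ _ _ fu1 fv2 fv1 fu2)).
- move/eqP/vanishX/andP => [/eqP u12 /eqP v12]; apply: hdist.1.
  by split; apply: det_eq0_same_vertex.
- move/eqP/vanishY/andP => [/eqP u1v2 /eqP v1u2]; apply: hdist.2.
  by split; apply: det_eq0_same_vertex.
Qed.
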